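(* Let $n\ge1$, let $X=\{x_1,\dots,x_n\}$, and let $$W=\{x_ix_jx_k,\ x_ix_kx_j,\ x_ix_jx_ix_k : i>j>k\}\cup\{x_ix_jx_j,\ x_ix_ix_j : i>j\}\subseteq X^*.$$ Let $Q_W$ be the Ufnarovskiĭ graph of $W$ and $W^{(i)}$ the set of $i$-chains, as described in the context. Then: (a) $|W^{(\frac{n(n+1)}2-1)}|=1$, and the unique element of $W^{(\frac{n(n+1)}2-1)}$ has maximal degree among all Anick chains. (b) $W^{(m)}=\emptyset$ for all $m\ge\frac{n(n+1)}2$. (c) $Q_W$ is a finite quiver without oriented cycles. (d) Each $W^{(i)}$ is a finite set.
   Context: $X^*$ is the free monoid on $X$, with empty word $1$. $W$ is the set of leading words of the Gröbner–Shirshov basis of the Chinese algebra of rank $n$, with respect to the length-lexicographic order with $x_n>\dots>x_1$; it is given explicitly in the statement. The Ufnarovskiĭ graph $Q_W$: - Its vertex set is $\{1\}\cup X\cup\{u: u$ is a nonempty proper right factor (suffix) of some element of $W\}$. - It has arrows $1\to x_i$ for each $i$. - It has arrows $u\to v$ between nonempty words whenever the word $uv$ contains some element of $W$ as a factor, but no proper left factor (prefix) of $uv$ does. Chains: - For $i\ge0$, an $i$-chain (Anick chain) is a sequence $(v_1,\dots,v_{i+1})$ of nonempty words such that $1\to v_1\to\cdots\to v_{i+1}$ is a path in $Q_W$. $W^{(i)}$ is the set of $i$-chains, and $W^{(-1)}$ consists of the single empty chain. - The degree of a chain $(v_1,\dots,v_{i+1})$ is the length of the word $v_1\cdots v_{i+1}$;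 its weight is $i+1$. *)

(* Words over X = {x_1,...,x_n} are modelled as seq 'I_n,
   with the letter x_{i+1} represented by the ordinal i : 'I_n, so that the
   order x_n > ... > x_1 is the order of the ordinals' values. *)
From mathcomp Require Import all_boot.
Set Implicit Arguments. Unset Strict Implicit. Unset Printing Implicit Defensive.

Definition word (n : nat) := seq 'I_n.

Definition inW (n : nat) (w : word n) : Prop :=
  (exists i j k : 'I_n, (j < i)%N /\ (k < j)%N /\
     (w = [:: i; j; k] \/ w = [:: i; k; j] \/ w = [:: i; j; i; k]))
  \/
  (exists i j : 'I_n, (j < i)%N /\ (w = [:: i; j; j] \/ w = [:: i; i; j])).

Definition containsW (n : nat) (u : word n) : Prop :=
  exists a w b : word n, inW w /\ u = a ++ w ++ b.

Definition vertex (n : nat) (u : word n) : Prop :=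
  u = [::] \/ size u = 1 \/
  (u <> [::] /\ exists w p : word n, inW w /\ p <> [::] /\ w = p ++ u).

Definition arrow (n : nat) (u v : word n) : Prop :=
  (u = [::] /\ size v = 1)
  \/
  (u <> [::] /\ v <> [::] /\ vertex u /\ vertex v /\
   containsW (u ++ v) /\
   forall k, (k < size (u ++ v))%N -> ~ containsW (take k (u ++ v))).

(* i-chains (Anick chains): (v_1,...,v_{i+1}) nonempty words such that
   1 -> v_1 -> ... -> v_{i+1} is a path in Q_W *)
Definition chain (n : nat) (i : nat) (c : seq (word n)) : Prop :=
  size c = i.+1 /\ (forall v, v \in c -> v <> [::]) /\
  forall k, (k < size c)%N -> arrow (nth [::] ([::] :: c) k) (nth [::] c k).

Definition degree (n : nat) (c : seq (word n)) : nat := size (flatten c).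

(* Read a word as the sequence of its letter indices and attach to a nonempty
   vertex u the pair (top u, last u) of its largest and its last letter.  For an
   arrow u -> v the word u ++ v ends with an element of W that overlaps u, and a
   case analysis of these overlaps shows that the pair decreases strictly in the
   lexicographic order, while the budget top^2 + 2 last decreases by at least
   |v|.  The pairs (m, l) with l <= m are numbered in lexicographic order by
   rank = C(m+1, 2) + l, so a chain starting at the letter a has at most
   C(a+2, 2) - 1 further entries.  A chain of that length must lower the rank by
   exactly one at each step, and from the words [a] and [a; b] (b < a) there is
   exactly one such step:
     [a] -> [a; a-1] -> [a; a-2] -> ... -> [a; 0] -> [a-1] -> [a-1; a-2] -> ...
   Starting from the top letter this is the unique longest chain; it uses up the
   whole budget, hence has maximal degree.  Vertices have length at most 3, so
   there are finitely many vertices and chains. *)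

From mathcomp Require Import all_boot zify.
From Stdlib Require Import Classical.
Set Implicit Arguments. Unset Strict Implicit. Unset Printing Implicit Defensive.

(* [path] for Prop-valued relations such as [arrow]. *)
Fixpoint rpath (T : Type) (r : T -> T -> Prop) (x : T) (p : seq T) : Prop :=
  if p is y :: p' then r x y /\ rpath r y p' else True.

Lemma rpathP (T : Type) (r : T -> T -> Prop) (x0 x : T) (p : seq T) :
  rpath r x p <-> forall k, k < size p -> r (nth x0 (x :: p) k) (nth x0 p k).
Proof.
elim: p x => [|y p IH] x /=; first by [].
split.
- by case=> rxy /IH rp [|k] //; apply: rp.
- by move=> rp; split; [exact: (rp 0) | apply/IH => k /(rp k.+1)].
Qed.

Lemma rpath_targets (T : eqType) (r : T -> T -> Prop) (Q : T -> Prop) (x : T) (p : seq T) :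
  (forall y z, r y z -> Q z) -> rpath r x p -> forall z, z \in p -> Q z.
Proof.
move=> rQ; elim: p x => [|y p IH] x //= [xy yp] z; rewrite inE => /orP [/eqP -> | zp].
  exact: rQ xy.
exact: IH yp z zp.
Qed.

Lemma finite_subset (T : eqType) (P : T -> Prop) (s : seq T) :
  (forall x, P x -> x \in s) -> exists s' : seq T, forall x, P x <-> x \in s'.
Proof.
suff [s' Es'] : exists s' : seq T, forall x, P x /\ x \in s <-> x \in s'.
  by move=> sub; exists s' => x; rewrite -Es'; split=> [Px | []]; [split => //; apply: sub|].
elim: s => [|y s [s' Es']]; first by exists [::] => x; split => [[]|].
have [Py | nPy] := classic (P y).
- exists (y :: s') => x; rewrite !in_cons; split.
  + by case=> Px /orP [-> // | xs]; apply/orP; right; apply/Es'.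
  + by case/orP => [/eqP -> | /Es' [Px ->]]; rewrite ?eqxx ?orbT.
- exists s' => x; rewrite in_cons; split => [[Px] | /Es' [Px ->]]; last by rewrite orbT.
  by case/orP => [/eqP xy | xs]; [rewrite xy in Px | apply/Es'].
Qed.

Lemma bounded_seqs (T : eqType) (s : seq T) k :
  exists l : seq (seq T), forall c, size c <= k -> {subset c <= s} -> c \in l.
Proof.
elim: k => [|k [l Hl]]; first by exists [:: [::]] => [[]].
exists ([::] :: [seq x :: c | x <- s, c <- l]) => [[|x c]] //= le_ck sub.
rewrite inE; apply/orP; right; apply: allpairs_f; first by apply: sub; rewrite inE eqxx.
by apply: Hl => // y yc; apply: sub; rewrite inE yc orbT.
Qed.

Lemma bin2_succ m : 'C(m.+2, 2) = 'C(m.+1, 2) + m.+1.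
Proof. by rewrite binS bin1. Qed.

Lemma bin2_lex_ltn m l m' l' : l' <= m' -> (m' < m) || (m' == m) && (l' < l) ->
  'C(m'.+1, 2) + l' < 'C(m.+1, 2) + l.
Proof.
move=> le_l'm' /orP [lt_m'm | /andP [/eqP -> lt_l'l]]; last by rewrite ltn_add2l.
have := @leq_bin2l _ _ 2 (lt_m'm : m'.+2 <= m.+1); rewrite bin2_succ; lia.
Qed.

Lemma bin2_lex_succ m l m' l' : l <= m -> l' <= m' ->
  ('C(m'.+1, 2) + l').+1 = 'C(m.+1, 2) + l ->
  (m' == m) && (l'.+1 == l) || [&& m'.+1 == m, l == 0 & l' == m'].
Proof.
move=> le_lm le_l'm'.
case: (ltngtP m' m) => [lt_m'm | lt_mm' | ->]; last by lia.
- case: (ltngtP m'.+1 m) => [lt | gt | <-]; last by rewrite bin2_succ; lia.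
  + have := @leq_bin2l _ _ 2 (lt : m'.+3 <= m.+1); rewrite !bin2_succ; lia.
  + lia.
- have := @leq_bin2l _ _ 2 (lt_mm' : m.+2 <= m'.+1); rewrite bin2_succ; lia.
Qed.

Definition leadb (s : seq nat) : bool :=
  match s with
  | [:: i; j; k] => [|| k < j < i, j < k < i, (j == k) && (j < i) | (i == j) && (k < i)]
  | [:: i; j; i'; k] => [&& i' == i, j < i & k < j]
  | _ => false
  end.

Definition vertexb (n : nat) (s : seq nat) : bool :=
  match s with
  | [::] | [:: _] => true
  (* [a b] with [a <= b] is a suffix of [i a b] only if some letter [i > b] exists *)
  | [:: a; b] => [|| b < a, (a < b) && (b.+1 < n) | (a == b) && (a.+1 < n)]
  | [:: j; i; k] => k < j < i
  | _ => false
  end.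

Definition top (s : seq nat) := foldr maxn 0 s.

Definition rank (s : seq nat) := 'C((top s).+1, 2) + last 0 s.

Definition budget (s : seq nat) := top s ^ 2 + 2 * last 0 s.

Definition canonb (s : seq nat) : bool :=
  match s with [:: _] => true | [:: a; b] => b < a | _ => false end.

Definition canon_next (s : seq nat) : seq nat :=
  match s with
  | [:: a] => [:: a; a.-1]
  | [:: a; 0] => [:: a.-1]
  | [:: a; b.+1] => [:: a; b]
  | _ => [::]
  end.

Lemma last_le_top s : last 0 s <= top s.
Proof. by case: s => [|x s] //=; elim: s x => [|y s IH] x /=; [lia | have := IH y; lia]. Qed.

Lemma rank_letter a : (rank [:: a]).+1 = 'C(a.+2, 2).
Proof. by rewrite /rank /top /= maxn0 bin2_succ addnS. Qed.

Lemma lead_suffix_vertexb n p t : all (fun x => x < n) (p ++ t) ->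
  p != [::] -> t != [::] -> leadb (p ++ t) -> vertexb n t.
Proof.
case: p => [|x [|y [|z [|w l]]]] //; case: t => [|d [|e [|f [|? ?]]]] //=; try lia.
all: by case: l.
Qed.

Lemma vertexb_drop_lead n s k : vertexb n s -> ~~ leadb (drop k s).
Proof. by case: s => [|a [|b [|c [|? ?]]]] //; case: k => [|[|[|[|k]]]] //=; lia. Qed.

(* Besides the lexicographic decrease of (top, last), the bounds on [last t]
   are what make [budget] drop by at least [size t]. *)
Lemma overlap_decrease n s t k : vertexb n s -> vertexb n t -> t != [::] ->
  k < size s -> leadb (drop k s ++ t) ->
  (top t < top s) && (2 * last 0 t + size t <= 2 * top t + 1 + 2 * last 0 s) ||
  (top t == top s) && (2 * last 0 t + size t <= 2 * last 0 s).
Proof.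
case: s => [|x [|y [|z [|? ?]]]] //; case: t => [|d [|e [|f [|? ?]]]] //;
case: k => [|[|[|k]]] //.
all: rewrite /top /=; lia.
Qed.

Lemma overlap_canon_next n s t k : canonb s -> vertexb n t -> t != [::] ->
  k < size s -> leadb (drop k s ++ t) ->
  (top t == top s) && ((last 0 t).+1 == last 0 s) ||
  [&& (top t).+1 == top s, last 0 s == 0 & last 0 t == top t] ->
  t = canon_next s.
Proof.
case: s => [|x [|y [|? ?]]] //; case: t => [|d [|e [|f [|? ?]]]] //;
case: k => [|[|k]] //.
all: try case: y => [|y].
all: rewrite /top /= => *; apply/eqP; rewrite /= ?eqseq_cons ?andbT; lia.
Qed.

Lemma overlap_rank n s t k : vertexb n s -> vertexb n t -> t != [::] ->
  k < size s -> leadb (drop k s ++ t) -> rank t < rank s.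
Proof.
move=> Vs Vt t0 ks Lst; apply: bin2_lex_ltn; first exact: last_le_top.
have [/andP [-> //] | /andP [/eqP -> le_last]] := orP (overlap_decrease Vs Vt t0 ks Lst).
by rewrite eqxx ltnn /=; case: t t0 {Vt Lst} le_last => //= x t _; lia.
Qed.

Lemma overlap_budget n s t k : vertexb n s -> vertexb n t -> t != [::] ->
  k < size s -> leadb (drop k s ++ t) -> budget t + size t <= budget s.
Proof.
move=> Vs Vt t0 ks Lst; rewrite /budget.
have [/andP [lt_top le_last] | /andP [/eqP -> le_last]] := orP (overlap_decrease Vs Vt t0 ks Lst).
  have := leq_mul lt_top lt_top; nia.
lia.
Qed.

Lemma canonb_vertexb n s : canonb s -> vertexb n s.
Proof. by case: s => [|a [|b [|? ?]]] //= ->. Qed.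

Lemma canon_next_lt m s : all (fun x => x < m) s -> all (fun x => x < m) (canon_next s).
Proof. by case: s => [|a [|b [|? ?]]] //=; try case: b => [|b] /=; lia. Qed.

Lemma canon_next_spec s : canonb s -> 0 < rank s ->
  [/\ canonb (canon_next s), (rank (canon_next s)).+1 = rank s
    & budget s = budget (canon_next s) + size (canon_next s)].
Proof.
rewrite /rank /budget /top; case: s => [|a [|[|b] [|? ?]]] //=.
all: case: a => [|a] //= lt_ba _; rewrite ?maxn0.
- by rewrite (maxn_idPl (leqnSn a)) addnS; split => //; nia.
- by rewrite bin2_succ; split => //; nia.
- by rewrite (maxn_idPl (ltnW lt_ba)) (maxn_idPl (ltnW (ltnW lt_ba))); split => //; nia.
Qed.

Lemma canon_next_lead s : canonb s -> 0 < rank s ->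
  leadb (s ++ canon_next s) /\
  forall k, k < size (s ++ canon_next s) -> ~~ leadb (take k (s ++ canon_next s)).
Proof.
rewrite /rank /top; case: s => [|a [|[|b] [|? ?]]] //=; case: a => [|a] //= lt_ba _.
all: split; first lia.
all: by case=> [|[|[|[|k]]]] //=; lia.
Qed.

Lemma budget_rank0 s : rank s = 0 -> budget s = 0.
Proof.
rewrite /rank /budget; case: (top s) => [|m]; first by rewrite add0n => ->.
by rewrite bin2_succ addnS.
Qed.

Definition letters n (u : word n) : seq nat := map (@nat_of_ord n) u.

Lemma size_letters n (u : word n) : size (letters u) = size u.
Proof. exact: size_map. Qed.

Lemma letters_inj n : injective (@letters n).
Proof. exact/inj_map/ord_inj. Qed.

Lemma letters_cat n (u v : word n) : letters (u ++ v) = letters u ++ letters v.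
Proof. exact: map_cat. Qed.

Section UfnarovskiiGraph.
Variable n : nat.
Implicit Types (u v w : word n) (p q : seq (word n)).
Local Notation arrow_path := (rpath (@arrow n)).

Lemma letters_lt u : all (fun x => x < n) (letters u).
Proof. by apply/allP => x /mapP [y _ ->]. Qed.

Lemma inW_leadb w : inW w <-> leadb (letters w).
Proof.
split.
  case=> [[i [j [k [ji [kj [->|[->|->]]]]]]] | [i [j [ji [->|->]]]]] /=; rewrite ?eqxx; lia.
case: w => [|i [|j [|k [|l [|? ?]]]]] //= lead_w; rewrite /inW.
  case/or4P: lead_w => [/andP [kj ji] | /andP [jk ki] |
                        /andP [/eqP/val_inj <- ji] | /andP [/eqP/val_inj <- ki]].
  - by left; exists i, j, k; do 2!split => //; left.
  - by left; exists i, k, j; do 2!split => //; right; left.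
  - by right; exists i, j; split => //; left.
  - by right; exists i, k; split => //; right.
case/and3P: lead_w => /eqP/val_inj -> ji lj.
by left; exists i, j, l; do 2!split => //; right; right.
Qed.

Lemma containsW_inW u : containsW u -> size u <= 3 -> inW u.
Proof.
move=> [a [w [b [Ww ->]]]].
have w3 : 3 <= size w by move/inW_leadb: Ww; case: w => [|? [|? [|? ?]]].
rewrite !size_cat; case: a => [|x a]; case: b => [|y b] /= le3; [by rewrite cats0 | lia..].
Qed.

Lemma vertex_vertexb u : vertex u <-> vertexb n (letters u).
Proof.
split.
  case=> [-> | [| [u0 [w [p [/inW_leadb Ww [p0 Ew]]]]]]] //; first by case: u => [|? []].
  apply: (lead_suffix_vertexb (p := letters p)); last by rewrite -letters_cat -Ew.
  - by rewrite -letters_cat; apply: letters_lt.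
  - by case: (p) p0.
  - by case: (u) u0.
case: u => [|a [|b [|c [|? ?]]]] //= Vu; rewrite /vertex /inW.
- by left.
- by right; left.
- right; right; split => //.
  have top_lt : n.-1 < n by have := ltn_ord a; lia.
  case/or3P: Vu => [ba | /andP [ab bn] | /andP [/eqP/val_inj <- an]].
  + exists [:: a; a; b], [:: a]; split => //.
    by right; exists a, b; split => //; right.
  + exists [:: Ordinal top_lt; a; b], [:: Ordinal top_lt]; split => //.
    left; exists (Ordinal top_lt), b, a; split; first by rewrite /=; lia.
    by split => //; right; left.
  + exists [:: Ordinal top_lt; a; a], [:: Ordinal top_lt]; split => //.
    right; exists (Ordinal top_lt), a; split; first by rewrite /=; lia.
    by left.
- right; right; split => //.
  case/andP: Vu => ab bc.
  exists [:: b; a; b; c], [:: b]; split => //.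
  by left; exists b, a, c; do 2!split => //; right; right.
Qed.

Lemma arrow_vertex u v : arrow u v -> vertex v.
Proof. by case=> [[_ v1] | [_ [_ [_ []]]]] //; right; left. Qed.

Lemma arrow_nonempty u v : arrow u v -> v <> [::].
Proof. by case=> [[_ v1] v0 | [_ []]] //; rewrite v0 in v1. Qed.

(* Minimality of the arrow puts the occurrence of W at the very end of [u ++ v];
   it cannot lie inside [v], since proper suffixes of W contain no element of W. *)
Lemma arrow_overlap u v : arrow u v -> u <> [::] ->
  [/\ vertexb n (letters u), vertexb n (letters v), letters v != [::]
    & exists2 k, k < size u & leadb (drop k (letters u) ++ letters v)].
Proof.
case=> [[] // | [_ [v0 [/vertex_vertexb Vu [/vertex_vertexb Vv [uvW minimal]]]]]] _.
split => //; first by case: (v) v0.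
case: uvW => [a [w [b [Ww Euv]]]].
have b0 : b = [::].
  case: b Euv => // x b Euv; exfalso; apply: (minimal (size (a ++ w))).
  - by rewrite Euv !size_cat /=; lia.
  - by exists a, w, [::]; rewrite Euv catA take_size_cat // cats0.
move: Euv; rewrite b0 cats0 => Euv.
have : drop (size a) (letters u ++ letters v) = letters w.
  by rewrite -letters_cat Euv !letters_cat drop_size_cat ?size_letters.
rewrite drop_cat size_letters; case: ltnP => [au | ua] Ew.
- by exists (size a); rewrite // Ew; apply/inW_leadb.
- have /negP [] := vertexb_drop_lead (size a - size u) Vv.
  by rewrite Ew; apply/inW_leadb.
Qed.

Lemma arrow_rank u v : arrow u v -> u <> [::] -> rank (letters v) < rank (letters u).
Proof.
move=> /arrow_overlap H /H [Vu Vv v0 [k ku lead]].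
by apply: (overlap_rank Vu Vv v0 _ lead); rewrite size_letters.
Qed.

Lemma arrow_budget u v : arrow u v -> u <> [::] ->
  budget (letters v) + size v <= budget (letters u).
Proof.
move=> /arrow_overlap H /H [Vu Vv v0 [k ku lead]].
by rewrite -(size_letters v); apply: (overlap_budget Vu Vv v0 _ lead); rewrite size_letters.
Qed.

Lemma arrow_canon u v : arrow u v -> u <> [::] -> canonb (letters u) ->
  (rank (letters v)).+1 = rank (letters u) -> letters v = canon_next (letters u).
Proof.
move=> /arrow_overlap H /H [Vu Vv v0 [k ku lead]] Cu Erank.
apply: (overlap_canon_next Cu Vv v0 _ lead); first by rewrite size_letters.
exact: bin2_lex_succ (last_le_top _) (last_le_top _) Erank.
Qed.

Lemma canon_arrow u v : canonb (letters u) -> 0 < rank (letters u) ->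
  letters v = canon_next (letters u) -> arrow u v.
Proof.
move=> Cu rank_u Ev; have [lead minimal] := canon_next_lead Cu rank_u.
have [Cv _ _] := canon_next_spec Cu rank_u.
rewrite -Ev -letters_cat in lead minimal.
right; split; first by case: (u) Cu.
split; first by move: Cv; rewrite -Ev; case: (v).
split; first by apply/vertex_vertexb; apply: canonb_vertexb.
split; first by apply/vertex_vertexb; rewrite Ev; apply: canonb_vertexb.
split; first by exists [::], (u ++ v), [::]; rewrite cats0 inW_leadb.
move=> k lt_k contains.
have size_uv : size (u ++ v) <= 4.
  rewrite -size_letters letters_cat Ev.
  by case: (letters u) Cu => [|a [|[|b] [|? ?]]].
have := minimal k; rewrite size_letters => /(_ lt_k) /negP; apply.
rewrite -map_take; apply/inW_leadb/(containsW_inW contains).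
by rewrite size_take lt_k; lia.
Qed.

Lemma path_rank_last u p : arrow_path u p -> u <> [::] ->
  rank (letters (last u p)) + size p <= rank (letters u).
Proof.
elim: p u => [|v p IH] u /= => [_ _ | [uv vp] u0]; first by rewrite addn0.
by have := arrow_rank uv u0; have := IH v vp (arrow_nonempty uv); lia.
Qed.

Lemma path_degree_budget u p : arrow_path u p -> u <> [::] -> degree p <= budget (letters u).
Proof.
elim: p u => [|v p IH] u //= [uv vp] u0; rewrite /degree /= size_cat -/(degree p).
by have := arrow_budget uv u0; have := IH v vp (arrow_nonempty uv); lia.
Qed.

Lemma path_no_cycle u p : arrow_path u p -> p <> [::] -> last u p <> u.
Proof.
case: p => [|v p] // uvp _; have [-> | /eqP u0] := eqVneq u [::].
  by apply: (rpath_targets (@arrow_nonempty) uvp); rewrite /= mem_last.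
move=> cycle; have := path_rank_last uvp u0; rewrite cycle /=; lia.
Qed.

Lemma canon_path_unique u p q : canonb (letters u) -> arrow_path u p -> arrow_path u q ->
  size p = rank (letters u) -> size q = rank (letters u) -> p = q.
Proof.
elim: p u q => [|v p IH] u [|w q] Cu //= up uq sp sq;
  [by rewrite -sp in sq | by rewrite -sq in sp |].
case: up uq => uv vp [uw wq].
have u0 : u <> [::] by move=> E; rewrite E in Cu.
have rank_u : 0 < rank (letters u) by rewrite -sp.
have [Cnext rank_next _] := canon_next_spec Cu rank_u.
have next x r : arrow u x -> arrow_path x r -> (size r).+1 = rank (letters u) ->
    letters x = canon_next (letters u).
  move=> ux xr sr; apply: (arrow_canon ux u0 Cu).
  by have := arrow_rank ux u0; have := path_rank_last xr (arrow_nonempty ux); lia.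
have Ev := next _ _ uv vp sp; have Ew := next _ _ uw wq sq.
have vw : v = w by apply: letters_inj; rewrite Ev Ew.
subst w.
by congr cons; apply: (IH v q _ vp wq); rewrite Ev //; lia.
Qed.

Lemma letters_onto s : all (fun x => x < n) s -> exists u, letters u = s.
Proof.
move=> s_lt; exists (pmap insub s); rewrite /letters (pmap_filter (insubK _)).
by apply/all_filterP; apply: sub_all s_lt => x; rewrite /= isSome_insub.
Qed.

Lemma canon_path_exists u : canonb (letters u) ->
  exists p, [/\ arrow_path u p, size p = rank (letters u) & degree p = budget (letters u)].
Proof.
move Er : (rank (letters u)) => r; elim: r u Er => [|r IH] u Er Cu.
  by exists [::]; rewrite /degree budget_rank0.
have rank_u : 0 < rank (letters u) by rewrite Er.
have [Cnext rank_next budget_next] := canon_next_spec Cu rank_u.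
have [v Ev] := letters_onto (canon_next_lt (letters_lt u)).
have rank_v : rank (letters v) = r by apply/eq_add_S; rewrite Ev rank_next.
have Cv : canonb (letters v) by rewrite Ev.
have [p [vp sp dp]] := IH v rank_v Cv.
exists (v :: p); split => /=; [split => // | by rewrite sp | ].
  exact: canon_arrow.
by rewrite /degree /= size_cat -/(degree p) dp -size_letters Ev budget_next addnC.
Qed.

Lemma arrow_nil v : arrow [::] v -> size v = 1.
Proof. by case=> [[] | []]. Qed.

Lemma chainE i c : chain i c <-> size c = i.+1 /\ arrow_path [::] c.
Proof.
split=> [[sc [_ /(rpathP (@arrow n) [::]) cp]] // | [sc cp]].
split=> //; split; last exact/(rpathP (@arrow n) [::]).
exact: (rpath_targets (@arrow_nonempty) cp).
Qed.

Lemma chain_letter i c : chain i c ->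
  exists a : 'I_n, exists p, [/\ c = [:: a] :: p, size p = i & arrow_path [:: a] p].
Proof.
move/chainE; case: c => [[] // | v p [[sp] [/arrow_nil v1 vp]]].
by case: v v1 vp => [|a [|]] // _ vp; exists a, p.
Qed.

Lemma letter_chain (a : 'I_n) p : arrow_path [:: a] p -> chain (size p) ([:: a] :: p).
Proof. by move=> ap; apply/chainE; split => //=; split => //; left. Qed.

Lemma vertex_finite : exists s : seq (word n), forall u, vertex u <-> u \in s.
Proof.
have [l Hl] := bounded_seqs (enum 'I_n) 3.
apply: (finite_subset (s := l)) => u /vertex_vertexb Vu; apply: Hl.
  by rewrite -size_letters; case: (letters u) Vu => [|? [|? [|? [|? ?]]]].
by move=> x; rewrite mem_enum.
Qed.

Lemma chain_finite i : exists s : seq (seq (word n)), forall c, chain i c <-> c \in s.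
Proof.
have [V HV] := vertex_finite; have [l Hl] := bounded_seqs V i.+1.
apply: (finite_subset (s := l)) => c /chainE [sc cp]; apply: Hl; first by rewrite sc.
by move=> v vc; apply/HV; apply: (rpath_targets (@arrow_vertex) cp).
Qed.

End UfnarovskiiGraph.

Lemma half_mul_succ n : n * (n + 1) %/ 2 = 'C(n.+1, 2).
Proof. by rewrite bin2 /= divn2 addn1 mulnC. Qed.

Lemma rank_letter_ltn a b : a < b -> rank [:: a] < rank [:: b].
Proof. by move=> ab; rewrite /rank /top /= !maxn0; apply: bin2_lex_ltn; rewrite ?ab. Qed.

Theorem lemma6p3 (n : nat) (hn : (1 <= n)%N) :
  let N := (n * (n + 1)) %/ 2 in
  (* (a) *)
  (exists c : seq (word n),
     chain N.-1 c /\
     (forall c', chain N.-1 c' -> c' = c) /\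
     (forall (m : nat) (c' : seq (word n)), chain m c' -> (degree c' <= degree c)%N))
  /\
  (* (b) *)
  (forall m : nat, (N <= m)%N -> forall c : seq (word n), ~ chain m c)
  /\
  (* (c) *)
  ((exists s : seq (word n), forall u, vertex u <-> u \in s) /\
   (forall (u : word n) (p : seq (word n)),
      vertex u -> p <> [::] ->
      ~ ((forall k, (k < size p)%N -> arrow (nth [::] (u :: p) k) (nth [::] p k))
         /\ last u p = u)))
  /\
  (* (d) *)
  (forall i : nat, exists s : seq (seq (word n)), forall c, chain i c <-> c \in s).
Proof.
rewrite /= half_mul_succ; case: n hn => // n' _.
have [p [top_p size_p deg_p]] := @canon_path_exists n'.+1 [:: ord_max] isT.
have a0 (a : 'I_n'.+1) : [:: a] <> [::] by [].
have rank_top : (rank (letters [:: @ord_max n'])).+1 = 'C(n'.+2, 2) := rank_letter n'.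
split; [|split; [|split]].
- exists ([:: ord_max] :: p); split; first by rewrite -rank_top -size_p; apply: letter_chain.
  split.
  + move=> c /chain_letter [a [q [-> size_q aq]]].
    have a_max : a = ord_max.
      apply/val_inj/eqP; rewrite eqn_leq -ltnS ltn_ord leqNgt /=; apply/negP => lt_an.
      have := path_rank_last aq (a0 a); have := rank_letter_ltn lt_an.
      rewrite /letters /= in rank_top *; lia.
    by subst a; congr cons; apply: (canon_path_unique _ aq top_p); rewrite // size_q -rank_top.
  + move=> m c /chain_letter [a [q [-> _ aq]]].
    rewrite /degree /= -/(degree q) -/(degree p) deg_p.
    have := path_degree_budget aq (a0 a); have := leq_ord a.
    rewrite /budget /top /letters /= !maxn0; nia.
- move=> m le_Nm c /chain_letter [a [q [_ size_q aq]]].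
  have := path_rank_last aq (a0 a); have := rank_letter a.
  have := @leq_bin2l _ _ 2 (leq_ord a : a.+2 <= n'.+2).
  rewrite /letters /=; lia.
- split; first exact: vertex_finite.
  move=> u q _ q0 [/(rpathP (@arrow _) [::]) uq]; exact: path_no_cycle uq q0.
- exact: chain_finite.
Qed.
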